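(* Let $(\mathcal{C},\otimes,\mathbf{1},a,\ell,r)$ be a monoidal category. Then $\mathcal{C}_q$, with the monoidal product $*$, unit $(\emptyset,\emptyset)$, identity unit constraints and associativity constraint $a_q$, is a monoidal category which is non-strict (whenever $\mathcal{C}$ has at least one object), even if $\mathcal{C}$ is strict; and the functor $j:\mathcal{C}\to\mathcal{C}_q$, $j(X)=((X),\bullet)$, equipped with the constraints $u:(\emptyset,\emptyset)\to((\mathbf{1}),\bullet)$ and $\eta_{X,Y}:((X,Y),\bullet\bullet)\to((X\otimes Y),\bullet)$ corresponding to $\mathrm{Id}_{\mathbf{1}}$ and $\mathrm{Id}_{X\otimes Y}$, is a strong monoidal functor and an equivalence of categories. Hence every monoidal category is monoidally equivalent to a non-strict monoidal category.
   Context: $\mathrm{Mag}(\bullet)$ is the free unital magma on one generator $\bullet$ (parenthesised words in $\bullet$, including the empty word $\emptyset$); $|t|$ is the number of bullets in $t$. Non-strictification $\mathcal{C}_q$: objects are pairs $(S,t)$ with $S$ a finite sequence of objects of $\mathcal{C}$ and $t\in\mathrm{Mag}(\bullet)$ with $|t|$ equal to the length of $S$. Parenthesisation: $\mathrm{Par}(\emptyset,\emptyset)=\mathbf{1}$, $\mathrm{Par}((X),\bullet)=X$, and for $|t|>1$ write uniquely $t=t_1t_2$ with $|t_1|,|t_2|\ge1$ and $S=S_1*S_2$ with $S_k$ of length $|t_k|$, and set $\mathrm{Par}(S,t)=\mathrm{Par}(S_1,t_1)\otimes\mathrm{Par}(S_2,t_2)$. Morphisms: $\mathrm{Hom}_{\mathcal{C}_q}((S,t),(S',t')):=\mathrm{Hom}_{\mathcal{C}}(\mathrm{Par}(S,t),\mathrm{Par}(S',t'))$.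 Monoidal product: $(S,t)*(S',t'):=(S*S',tt')$ (concatenation of sequences, magma product of words), with $(\emptyset,\emptyset)$ a strict two-sided unit; for nonempty factors $\mathrm{Par}((S,t)*(S',t'))=\mathrm{Par}(S,t)\otimes\mathrm{Par}(S',t')$ and for morphisms $f,g$ one sets $f*g:=f\otimes g$ (with the evident conjugation by the unit isomorphisms $\ell,r$ of $\mathcal{C}$ when a factor is $(\emptyset,\emptyset)$). Left and right unit constraints are identities. The associativity constraint $a_q:((S,t)*(S',t'))*(S'',t'')=(S*S'*S'',(tt')t'')\to(S*S'*S'',t(t't''))$ is the morphism with $\mathrm{Par}(a_q)=a_{\mathrm{Par}(S,t),\mathrm{Par}(S',t'),\mathrm{Par}(S'',t'')}$. A monoidal category is strict if its associativity and unit constraints are identities, and non-strict otherwise. *)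

Record CatData : Type := {
  ob   : Type;
  hom  : ob -> ob -> Type;
  idm  : forall x, hom x x;
  comp : forall x y z, hom y z -> hom x y -> hom x z   (* comp g f = g o f *)
}.

Arguments idm {C} x : rename.
Arguments comp {C x y z} g f : rename.

Definition cat_laws (C : CatData) : Prop :=
  (forall x y (f : hom C x y), comp (idm y) f = f) /\
  (forall x y (f : hom C x y), comp f (idm x) = f) /\
  (forall x y z w (f : hom C x y) (g : hom C y z) (h : hom C z w),
      comp h (comp g f) = comp (comp h g) f).

Definition is_iso {C : CatData} {x y : ob C} (f : hom C x y) : Prop :=
  exists g : hom C y x, comp g f = idm x /\ comp f g = idm y.

Record MonData : Type := {
  mcat    : CatData;
  tens    : ob mcat -> ob mcat -> ob mcat;
  tensm   : forall x x' y y', hom mcat x x' -> hom mcat y y' ->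
              hom mcat (tens x y) (tens x' y');
  munit   : ob mcat;
  massoc  : forall x y z, hom mcat (tens (tens x y) z) (tens x (tens y z));
  massocI : forall x y z, hom mcat (tens x (tens y z)) (tens (tens x y) z);
  mlu     : forall x, hom mcat (tens munit x) x;
  mluI    : forall x, hom mcat x (tens munit x);
  mru     : forall x, hom mcat (tens x munit) x;
  mruI    : forall x, hom mcat x (tens x munit)
}.

Arguments tens {M} x y : rename.
Arguments tensm {M x x' y y'} f g : rename.
Arguments munit {M} : rename.
Arguments massoc {M} x y z : rename.
Arguments massocI {M} x y z : rename.
Arguments mlu {M} x : rename.
Arguments mluI {M} x : rename.
Arguments mru {M} x : rename.
Arguments mruI {M} x : rename.

Definition mon_laws (M : MonData) : Prop :=
  cat_laws (mcat M) /\
  (forall x y : ob (mcat M), tensm (idm x) (idm y) = idm (tens x y)) /\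
  (forall x1 x2 x3 y1 y2 y3 (f : hom (mcat M) x1 x2) (f' : hom (mcat M) x2 x3)
          (g : hom (mcat M) y1 y2) (g' : hom (mcat M) y2 y3),
      tensm (comp f' f) (comp g' g) = comp (tensm f' g') (tensm f g)) /\
  (forall x y z : ob (mcat M), comp (massocI x y z) (massoc x y z) = idm _ /\
                 comp (massoc x y z) (massocI x y z) = idm _) /\
  (forall x : ob (mcat M), comp (mluI x) (mlu x) = idm _ /\ comp (mlu x) (mluI x) = idm _) /\
  (forall x : ob (mcat M), comp (mruI x) (mru x) = idm _ /\ comp (mru x) (mruI x) = idm _) /\
  (forall x x' y y' z z' (f : hom (mcat M) x x') (g : hom (mcat M) y y')
          (h : hom (mcat M) z z'),
      comp (massoc x' y' z') (tensm (tensm f g) h)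
      = comp (tensm f (tensm g h)) (massoc x y z)) /\
  (forall x x' (f : hom (mcat M) x x'),
      comp (mlu x') (tensm (idm munit) f) = comp f (mlu x)) /\
  (forall x x' (f : hom (mcat M) x x'),
      comp (mru x') (tensm f (idm munit)) = comp f (mru x)) /\
  (forall w x y z : ob (mcat M),
      comp (massoc w x (tens y z)) (massoc (tens w x) y z)
      = comp (tensm (idm w) (massoc x y z))
             (comp (massoc w (tens x y) z) (tensm (massoc w x y) (idm z)))) /\
  (forall x y : ob (mcat M),
      comp (tensm (idm x) (mlu y)) (massoc x munit y) = tensm (mru x) (idm y)).

Definition strict (M : MonData) : Prop :=
  (forall x y z : ob (mcat M), exists e : tens (tens x y) z = tens x (tens y z),
      massoc x y z = eq_rect _ (fun w => hom (mcat M) (tens (tens x y) z) w)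
                             (idm _) _ e) /\
  (forall x : ob (mcat M), exists e : tens munit x = x,
      mlu x = eq_rect _ (fun w => hom (mcat M) (tens munit x) w) (idm _) _ e) /\
  (forall x : ob (mcat M), exists e : tens x munit = x,
      mru x = eq_rect _ (fun w => hom (mcat M) (tens x munit) w) (idm _) _ e).

Definition non_strict (M : MonData) : Prop := ~ strict M.

Record FunData (C D : CatData) : Type := {
  fob  : ob C -> ob D;
  fhom : forall x y, hom C x y -> hom D (fob x) (fob y)
}.

Arguments fob {C D} F x : rename.
Arguments fhom {C D} F {x y} f : rename.

Definition functor_laws {C D : CatData} (F : FunData C D) : Prop :=
  (forall x, fhom F (idm x) = idm (fob F x)) /\
  (forall x y z (f : hom C x y) (g : hom C y z),
      fhom F (comp g f) = comp (fhom F g) (fhom F f)).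

Definition fun_id (C : CatData) : FunData C C :=
  {| fob := fun x => x; fhom := fun x y f => f |}.

Definition fun_comp {C D E : CatData} (G : FunData D E) (F : FunData C D)
  : FunData C E :=
  {| fob := fun x => fob G (fob F x);
     fhom := fun x y f => fhom G (fhom F f) |}.

Definition nat_iso {C D : CatData} (F G : FunData C D) : Prop :=
  exists alpha : forall x, hom D (fob F x) (fob G x),
    (forall x, is_iso (alpha x)) /\
    (forall x y (f : hom C x y),
        comp (alpha y) (fhom F f) = comp (fhom G f) (alpha x)).

Definition equivalence {C D : CatData} (F : FunData C D) : Prop :=
  functor_laws F /\
  exists G : FunData D C, functor_laws G /\
    nat_iso (fun_comp G F) (fun_id C) /\ nat_iso (fun_comp F G) (fun_id D).

Definition strong_monoidal (M N : MonData) (F : FunData (mcat M) (mcat N))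
  (u : hom (mcat N) munit (fob F munit))
  (eta : forall x y, hom (mcat N) (tens (fob F x) (fob F y)) (fob F (tens x y)))
  : Prop :=
  functor_laws F /\
  is_iso u /\
  (forall x y : ob (mcat M), is_iso (eta x y)) /\
  (forall x x' y y' (f : hom (mcat M) x x') (g : hom (mcat M) y y'),
      comp (fhom F (tensm f g)) (eta x y) = comp (eta x' y') (tensm (fhom F f) (fhom F g))) /\
  (forall x y z : ob (mcat M),
      comp (fhom F (massoc x y z)) (comp (eta (tens x y) z) (tensm (eta x y) (idm _)))
      = comp (eta x (tens y z)) (comp (tensm (idm _) (eta y z))
                                      (massoc (fob F x) (fob F y) (fob F z)))) /\
  (forall x : ob (mcat M),
      comp (fhom F (mlu x)) (comp (eta munit x) (tensm u (idm _))) = mlu (fob F x)) /\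
  (forall x : ob (mcat M),
      comp (fhom F (mru x)) (comp (eta x munit) (tensm (idm _) u)) = mru (fob F x)).

(* An object (S,t) with S a sequence of objects and t ∈ Mag(•), |t| = |S|,
   is encoded as the parenthesised word t with its leaves labelled by the
   entries of S in order: None = (∅,∅), Some w with w a nonempty binary tree
   with leaves labelled by objects.  [qseq] and [qshape] recover (S,t). *)

Inductive ltree (A : Type) : Type :=
| Leaf : A -> ltree A
| Node : ltree A -> ltree A -> ltree A.
Arguments Leaf {A} a.
Arguments Node {A} l r.

(* shape in Mag(•): None = empty word, Some tree = nonempty parenthesised word *)
Inductive btree : Type := bullet | bnode : btree -> btree -> btree.

Fixpoint lt_seq {A} (w : ltree A) : list A :=
  match w with Leaf a => a :: nil | Node l r => lt_seq l ++ lt_seq r end.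
Fixpoint lt_shape {A} (w : ltree A) : btree :=
  match w with Leaf _ => bullet | Node l r => bnode (lt_shape l) (lt_shape r) end.
Definition qseq {A} (x : option (ltree A)) : list A :=
  match x with None => nil | Some w => lt_seq w end.
Definition qshape {A} (x : option (ltree A)) : option btree :=
  match x with None => None | Some w => Some (lt_shape w) end.

Section Cq.
Variable M : MonData.
Let C := mcat M.

Definition qob : Type := option (ltree (ob C)).

Fixpoint parT (w : ltree (ob C)) : ob C :=
  match w with Leaf X => X | Node l r => tens (parT l) (parT r) end.

Definition Par (x : qob) : ob C :=
  match x with None => munit | Some w => parT w end.

(* monoidal product on objects: concatenation / magma product *)
Definition qprod (x y : qob) : qob :=
  match x with
  | None => y
  | Some a => match y with None => Some a | Some b => Some (Node a b) end
  end.

Definition qcat : CatData :=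
  {| ob := qob;
     hom := fun x y => hom C (Par x) (Par y);
     idm := fun x => idm (Par x);
     comp := fun x y z g f => comp g f |}.

Definition phi (x y : qob) : hom C (tens (Par x) (Par y)) (Par (qprod x y)) :=
  match x as x0 return hom C (tens (Par x0) (Par y)) (Par (qprod x0 y)) with
  | None => mlu (Par y)
  | Some a =>
      match y as y0 return hom C (tens (parT a) (Par y0)) (Par (qprod (Some a) y0)) with
      | None => mru (parT a)
      | Some b => idm _
      end
  end.

Definition phiI (x y : qob) : hom C (Par (qprod x y)) (tens (Par x) (Par y)) :=
  match x as x0 return hom C (Par (qprod x0 y)) (tens (Par x0) (Par y)) with
  | None => mluI (Par y)
  | Some a =>
      match y as y0 return hom C (Par (qprod (Some a) y0)) (tens (parT a) (Par y0)) with
      | None => mruI (parT a)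
      | Some b => idm _
      end
  end.

Definition qtensm (x x' y y' : qob) :
  hom C (Par x) (Par x') -> hom C (Par y) (Par y') ->
  hom C (Par (qprod x y)) (Par (qprod x' y')) :=
  match x as x0, x' as x1, y as y0, y' as y1
  return hom C (Par x0) (Par x1) -> hom C (Par y0) (Par y1) ->
         hom C (Par (qprod x0 y0)) (Par (qprod x1 y1)) with
  | Some a, Some a', Some b, Some b' => fun f g => tensm f g
  | x0, x1, y0, y1 => fun f g => comp (phi x1 y1) (comp (tensm f g) (phiI x0 y0))
  end.

(* associativity constraint a_q: a_{Par x, Par y, Par z} for nonempty
   factors; for an empty factor both sides coincide and a_q is the identity *)
Definition qassoc (x y z : qob) :
  hom C (Par (qprod (qprod x y) z)) (Par (qprod x (qprod y z))) :=
  match x as x0, y as y0, z as z0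
  return hom C (Par (qprod (qprod x0 y0) z0)) (Par (qprod x0 (qprod y0 z0))) with
  | Some a, Some b, Some c => massoc (parT a) (parT b) (parT c)
  | None, _, _ => idm _
  | Some a, None, _ => idm _
  | Some a, Some b, None => idm _
  end.

Definition qassocI (x y z : qob) :
  hom C (Par (qprod x (qprod y z))) (Par (qprod (qprod x y) z)) :=
  match x as x0, y as y0, z as z0
  return hom C (Par (qprod x0 (qprod y0 z0))) (Par (qprod (qprod x0 y0) z0)) with
  | Some a, Some b, Some c => massocI (parT a) (parT b) (parT c)
  | None, _, _ => idm _
  | Some a, None, _ => idm _
  | Some a, Some b, None => idm _
  end.

Definition qlu (x : qob) : hom C (Par (qprod None x)) (Par x) := idm (Par x).
Definition qru (x : qob) : hom C (Par (qprod x None)) (Par x) :=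
  match x as x0 return hom C (Par (qprod x0 None)) (Par x0) with
  | None => idm _ | Some a => idm _ end.

Definition Cq : MonData :=
  {| mcat := qcat;
     tens := qprod;
     tensm := qtensm;
     munit := None;
     massoc := qassoc;
     massocI := qassocI;
     mlu := qlu;
     mluI := qlu;
     mru := qru;
     mruI := fun x => match x as x0 return hom C (Par x0) (Par (qprod x0 None)) with
                      | None => idm _ | Some a => idm _ end |}.

Definition j_fun : FunData (mcat M) (mcat Cq) :=
  {| fob := fun X => Some (Leaf X) : ob (mcat Cq);
     fhom := fun X Y (f : hom C X Y) => f |}.

Definition j_u : hom (mcat Cq) (@munit Cq) (fob j_fun munit) := idm (@munit M).

Definition j_eta (X Y : ob C) :
  hom (mcat Cq) (@tens Cq (fob j_fun X) (fob j_fun Y)) (fob j_fun (tens X Y)) :=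
  idm (tens X Y).

End Cq.

(* The structure of C_q is the structure of C transported along the
   parenthesisation Par: an object x of C_q stands for Par x, a morphism
   x -> y is a morphism Par x -> Par y, and the canonical isomorphisms
   phi x y : Par x ⊗ Par y -> Par (x * y) (identities, or a unitor when a
   factor is the empty word) identify the tensor product of morphisms and the
   associator of C_q with the phi-conjugates of those of C.

   Specialising to C_q (where Kelly's lemmas identify
   the literal definitions with the conjugates) gives the monoidal laws.
   Non-strictness holds because (••)• and •(••) are different words; the
   embedding j is strong monoidal because C_q restricted to one-letter words
   is literally C, and Par is a quasi-inverse of j. *)


Local Notation "g ∘ f" := (comp g f) (at level 40, left associativity).
Local Notation "f ⊗ g" := (tensm f g) (at level 35, no associativity).

Section Monoidal.

Variable M : MonData.
Hypothesis HM : mon_laws M.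

Local Notation C := (mcat M).
Local Notation "1" := (@munit M).

Lemma comp_idl x y (f : hom C x y) : idm y ∘ f = f.
Proof. apply HM. Qed.

Lemma comp_idr x y (f : hom C x y) : f ∘ idm x = f.
Proof. apply HM. Qed.

Lemma comp_assoc x y z w (f : hom C x y) (g : hom C y z) (h : hom C z w) :
  h ∘ (g ∘ f) = (h ∘ g) ∘ f.
Proof. apply HM. Qed.

Lemma tensm_idm (x y : ob C) : idm x ⊗ idm y = idm (tens x y).
Proof. apply HM. Qed.

Lemma tensm_comp x1 x2 x3 y1 y2 y3 (f : hom C x1 x2) (f' : hom C x2 x3)
      (g : hom C y1 y2) (g' : hom C y2 y3) :
  (f' ∘ f) ⊗ (g' ∘ g) = (f' ⊗ g') ∘ (f ⊗ g).
Proof. apply HM. Qed.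

Lemma assocI_assoc (x y z : ob C) : massocI x y z ∘ massoc x y z = idm _.
Proof. apply HM. Qed.

Lemma assoc_assocI (x y z : ob C) : massoc x y z ∘ massocI x y z = idm _.
Proof. apply HM. Qed.

Lemma luI_lu (x : ob C) : mluI x ∘ mlu x = idm _.
Proof. apply HM. Qed.

Lemma lu_luI (x : ob C) : mlu x ∘ mluI x = idm _.
Proof. apply HM. Qed.

Lemma ruI_ru (x : ob C) : mruI x ∘ mru x = idm _.
Proof. apply HM. Qed.

Lemma ru_ruI (x : ob C) : mru x ∘ mruI x = idm _.
Proof. apply HM. Qed.

Lemma assoc_nat {x x' y y' z z'} (f : hom C x x') (g : hom C y y') (h : hom C z z') :
  massoc x' y' z' ∘ ((f ⊗ g) ⊗ h) = (f ⊗ (g ⊗ h)) ∘ massoc x y z.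
Proof. apply HM. Qed.

Lemma lu_nat x x' (f : hom C x x') : mlu x' ∘ (idm 1 ⊗ f) = f ∘ mlu x.
Proof. apply HM. Qed.

Lemma ru_nat x x' (f : hom C x x') : mru x' ∘ (f ⊗ idm 1) = f ∘ mru x.
Proof. apply HM. Qed.

Lemma pentagon (w x y z : ob C) :
  massoc w x (tens y z) ∘ massoc (tens w x) y z
  = (idm w ⊗ massoc x y z) ∘ (massoc w (tens x y) z ∘ (massoc w x y ⊗ idm z)).
Proof. apply HM. Qed.

Lemma triangle (x y : ob C) :
  (idm x ⊗ mlu y) ∘ massoc x 1 y = mru x ⊗ idm y.
Proof. apply HM. Qed.

Ltac rnest := repeat rewrite <- comp_assoc.

Lemma chain {x y z w} {f : hom C x y} {g : hom C y z} {h : hom C x z} {k : hom C w x} :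
  g ∘ f = h -> g ∘ (f ∘ k) = h ∘ k.
Proof. intro E. rewrite comp_assoc, E. reflexivity. Qed.

(* Padding a goal with a final identity gives every factor of a right-nested
   composite a successor, so that chain forms apply uniformly. *)
Lemma pad_idm x y (h h' : hom C x y) : h ∘ idm x = h' ∘ idm x -> h = h'.
Proof. rewrite !comp_idr. trivial. Qed.

Lemma tensm_merge {x1 x2 x3 y1 y2 y3} (f : hom C x1 x2) (f' : hom C x2 x3)
      (g : hom C y1 y2) (g' : hom C y2 y3) :
  (f' ⊗ g') ∘ (f ⊗ g) = (f' ∘ f) ⊗ (g' ∘ g).
Proof. symmetry. apply tensm_comp. Qed.

Lemma tensm_comp_l x1 x2 x3 y (f : hom C x1 x2) (f' : hom C x2 x3) :
  (f' ∘ f) ⊗ idm y = (f' ⊗ idm y) ∘ (f ⊗ idm y).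
Proof. rewrite <- tensm_comp, comp_idl. reflexivity. Qed.

Lemma tensm_comp_r x y1 y2 y3 (g : hom C y1 y2) (g' : hom C y2 y3) :
  idm x ⊗ (g' ∘ g) = (idm x ⊗ g') ∘ (idm x ⊗ g).
Proof. rewrite <- tensm_comp, comp_idl. reflexivity. Qed.

Lemma tensm_merge_l {x1 x2 x3} y (f : hom C x1 x2) (f' : hom C x2 x3) :
  (f' ⊗ idm y) ∘ (f ⊗ idm y) = (f' ∘ f) ⊗ idm y.
Proof. symmetry. apply tensm_comp_l. Qed.

Lemma tensm_merge_r x {y1 y2 y3} (g : hom C y1 y2) (g' : hom C y2 y3) :
  (idm x ⊗ g') ∘ (idm x ⊗ g) = idm x ⊗ (g' ∘ g).
Proof. symmetry. apply tensm_comp_r. Qed.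

Lemma tensm_factor_l x1 x2 x3 y y' (f : hom C x1 x2) (f' : hom C x2 x3) (g : hom C y y') :
  (f' ∘ f) ⊗ g = (f' ⊗ idm y') ∘ (f ⊗ g).
Proof. rewrite <- tensm_comp, comp_idl. reflexivity. Qed.

Lemma tensm_factor_r x x' y1 y2 y3 (f : hom C x x') (g : hom C y1 y2) (g' : hom C y2 y3) :
  f ⊗ (g' ∘ g) = (idm x' ⊗ g') ∘ (f ⊗ g).
Proof. rewrite <- tensm_comp, comp_idl. reflexivity. Qed.

Lemma tensm_inverse_l {x y} z {f : hom C x y} {f' : hom C y x} :
  f ∘ f' = idm y -> (f ⊗ idm z) ∘ (f' ⊗ idm z) = idm (tens y z).
Proof. intro E. rewrite tensm_merge_l, E, tensm_idm. reflexivity. Qed.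

Lemma tensm_interchange {x x' y y'} (f : hom C x x') (g : hom C y y') :
  (idm x' ⊗ g) ∘ (f ⊗ idm y) = (f ⊗ idm y') ∘ (idm x ⊗ g).
Proof. rewrite <- !tensm_comp, !comp_idl, !comp_idr. reflexivity. Qed.

Lemma assoc_nat_l {x x'} y z (f : hom C x x') :
  massoc x' y z ∘ ((f ⊗ idm y) ⊗ idm z) = (f ⊗ idm (tens y z)) ∘ massoc x y z.
Proof. rewrite assoc_nat, tensm_idm. reflexivity. Qed.

Lemma assoc_nat_m x {y y'} z (g : hom C y y') :
  massoc x y' z ∘ ((idm x ⊗ g) ⊗ idm z) = (idm x ⊗ (g ⊗ idm z)) ∘ massoc x y z.
Proof. apply assoc_nat. Qed.

Lemma assoc_nat_r x y {z z'} (h : hom C z z') :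
  massoc x y z' ∘ (idm (tens x y) ⊗ h) = (idm x ⊗ (idm y ⊗ h)) ∘ massoc x y z.
Proof. rewrite <- tensm_idm, assoc_nat. reflexivity. Qed.

Lemma cancel_r {x y z} {f : hom C x y} {f' : hom C y x} {h h' : hom C y z} :
  f ∘ f' = idm y -> h ∘ f = h' ∘ f -> h = h'.
Proof.
  intros Hinv E.
  rewrite <- (comp_idr _ _ h), <- (comp_idr _ _ h'), <- Hinv, !comp_assoc, E.
  reflexivity.
Qed.

Lemma cancel_l {x y z} {f : hom C x y} {f' : hom C y x} {h h' : hom C z x} :
  f' ∘ f = idm x -> f ∘ h = f ∘ h' -> h = h'.
Proof.
  intros Hinv E.
  rewrite <- (comp_idl _ _ h), <- (comp_idl _ _ h'), <- Hinv, <- !comp_assoc, E.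
  reflexivity.
Qed.

(* The functors [1 ⊗ -] and [- ⊗ 1] are faithful, being isomorphic to the
   identity through the unitors. *)
Lemma lu_faithful x y (f g : hom C x y) : idm 1 ⊗ f = idm 1 ⊗ g -> f = g.
Proof.
  intro E.
  assert (Hconj : forall k : hom C x y, k = mlu y ∘ ((idm 1 ⊗ k) ∘ mluI x)).
  { intro k. rewrite comp_assoc, lu_nat. rnest. rewrite lu_luI, comp_idr.
    reflexivity. }
  rewrite (Hconj f), (Hconj g), E. reflexivity.
Qed.

Lemma ru_faithful x y (f g : hom C x y) : f ⊗ idm 1 = g ⊗ idm 1 -> f = g.
Proof.
  intro E.
  assert (Hconj : forall k : hom C x y, k = mru y ∘ ((k ⊗ idm 1) ∘ mruI x)).
  { intro k. rewrite comp_assoc, ru_nat. rnest. rewrite ru_ruI, comp_idr.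
    reflexivity. }
  rewrite (Hconj f), (Hconj g), E. reflexivity.
Qed.

(* Kelly's coherence consequences of the pentagon and triangle axioms:
   they describe the associator when one of the factors is the unit. *)
Lemma lu_assoc (x y : ob C) :
  mlu (tens x y) ∘ massoc 1 x y = mlu x ⊗ idm y.
Proof.
  apply lu_faithful.
  set (P := massoc 1 (tens 1 x) y ∘ (massoc 1 1 x ⊗ idm y)).
  set (PI := (massocI 1 1 x ⊗ idm y) ∘ massocI 1 (tens 1 x) y).
  apply (cancel_r (f := P) (f' := PI)).
  { unfold P, PI. rnest. rewrite (comp_assoc _ _ _ _ _ (massocI 1 1 x ⊗ idm y)).
    rewrite <- tensm_comp_l, assoc_assocI, tensm_idm, comp_idl, assoc_assocI.
    reflexivity. }
  unfold P. rewrite tensm_comp_r. rnest.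
  rewrite <- pentagon, comp_assoc, triangle, <- (tensm_idm x y), <- assoc_nat.
  rewrite (comp_assoc _ _ _ _ _ _ (idm 1 ⊗ (mlu x ⊗ idm y))), <- assoc_nat_m.
  rnest. rewrite <- tensm_comp_l, triangle. reflexivity.
Qed.

Lemma ru_assoc (x y : ob C) :
  (idm x ⊗ mru y) ∘ massoc x y 1 = mru (tens x y).
Proof.
  apply ru_faithful, (cancel_l (assocI_assoc x y 1)).
  symmetry. rewrite <- triangle, <- (tensm_idm x y), comp_assoc, assoc_nat.
  rewrite <- comp_assoc, pentagon. rnest.
  rewrite (comp_assoc _ _ _ _ _ (idm x ⊗ massoc y 1 1)), <- tensm_comp_r, triangle.
  rewrite comp_assoc, <- assoc_nat_m. rnest. rewrite <- tensm_comp_l.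
  reflexivity.
Qed.

Lemma lu_tens_unit (x : ob C) : mlu (tens 1 x) = idm 1 ⊗ mlu x.
Proof.
  apply (cancel_l (luI_lu x)).
  symmetry. apply lu_nat.
Qed.

Lemma lu_unit_ru_unit : mlu 1 = mru 1.
Proof.
  apply ru_faithful.
  rewrite <- triangle, <- lu_assoc, lu_tens_unit. reflexivity.
Qed.

Lemma luI_unit_ruI_unit : mluI 1 = mruI 1.
Proof.
  apply (cancel_l (ruI_ru 1)).
  rewrite ru_ruI, <- lu_unit_ru_unit, lu_luI. reflexivity.
Qed.

Section Transport.
(* Given objects [O] with an interpretation [P] in [C] and a binary
   operation [t], together with isomorphisms [phi x y : P x ⊗ P y -> P (t x y)],
   conjugating the tensor product and the associator of [C] by [phi] yields
   the tensor of morphisms [ttensm] and the associator [tassoc] of a monoidal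
   structure on the category with hom-sets [hom C (P x) (P y)]. *)

Variables (O : Type) (P : O -> ob C) (t : O -> O -> O).
Variable phi : forall x y, hom C (tens (P x) (P y)) (P (t x y)).
Variable phiI : forall x y, hom C (P (t x y)) (tens (P x) (P y)).
Hypothesis phi_phiI : forall x y, phi x y ∘ phiI x y = idm _.
Hypothesis phiI_phi : forall x y, phiI x y ∘ phi x y = idm _.

Definition ttensm {x x' y y'} (f : hom C (P x) (P x')) (g : hom C (P y) (P y')) :
  hom C (P (t x y)) (P (t x' y')) :=
  phi x' y' ∘ ((f ⊗ g) ∘ phiI x y).

Definition tassoc (x y z : O) : hom C (P (t (t x y) z)) (P (t x (t y z))) :=
  phi x (t y z) ∘ ((idm (P x) ⊗ phi y z) ∘ (massoc (P x) (P y) (P z) ∘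
    ((phiI x y ⊗ idm (P z)) ∘ phiI (t x y) z))).

Lemma ttensm_idm x y : ttensm (idm (P x)) (idm (P y)) = idm (P (t x y)).
Proof. unfold ttensm. rewrite tensm_idm, comp_idl. apply phi_phiI. Qed.

Lemma ttensm_comp {x1 x2 x3 y1 y2 y3} (f : hom C (P x1) (P x2)) (f' : hom C (P x2) (P x3))
      (g : hom C (P y1) (P y2)) (g' : hom C (P y2) (P y3)) :
  ttensm (f' ∘ f) (g' ∘ g) = ttensm f' g' ∘ ttensm f g.
Proof.
  unfold ttensm. rnest. rewrite (chain (phiI_phi _ _)), comp_idl, tensm_comp.
  rnest. reflexivity.
Qed.

Lemma ttensm_phi {x x' y y'} (f : hom C (P x) (P x')) (g : hom C (P y) (P y')) :
  ttensm f g ∘ phi x y = phi x' y' ∘ (f ⊗ g).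
Proof.
  unfold ttensm. rnest. rewrite phiI_phi, comp_idr. reflexivity.
Qed.

Lemma tassoc_phi x y z :
  tassoc x y z ∘ (phi (t x y) z ∘ (phi x y ⊗ idm (P z)))
  = phi x (t y z) ∘ ((idm (P x) ⊗ phi y z) ∘ massoc (P x) (P y) (P z)).
Proof.
  unfold tassoc. rnest.
  rewrite (chain (phiI_phi _ _)), comp_idl, tensm_merge.
  rewrite phiI_phi, comp_idl, tensm_idm, comp_idr. reflexivity.
Qed.

Lemma tassoc_phi_chain w x y z (k : hom C w (tens (tens (P x) (P y)) (P z))) :
  tassoc x y z ∘ (phi (t x y) z ∘ ((phi x y ⊗ idm (P z)) ∘ k))
  = phi x (t y z) ∘ ((idm (P x) ⊗ phi y z) ∘ (massoc (P x) (P y) (P z) ∘ k)).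
Proof.
  rewrite (comp_assoc _ _ _ _ _ _ (phi (t x y) z)), (chain (tassoc_phi x y z)).
  rnest. reflexivity.
Qed.

Lemma phi_phiI_twice x y z :
  (phi (t x y) z ∘ (phi x y ⊗ idm (P z))) ∘ ((phiI x y ⊗ idm (P z)) ∘ phiI (t x y) z)
  = idm _.
Proof.
  rnest. rewrite (chain (tensm_inverse_l (P z) (phi_phiI x y))), comp_idl.
  apply phi_phiI.
Qed.

(* Naturality of [tassoc]: after precomposing with the isomorphism of
   [phi_phiI_twice], both sides become [phi ∘ (1 ⊗ phi) ∘ (f ⊗ (g ⊗ h)) ∘ α]. *)
Lemma tassoc_nat x x' y y' z z' (f : hom C (P x) (P x')) (g : hom C (P y) (P y'))
      (h : hom C (P z) (P z')) :
  tassoc x' y' z' ∘ ttensm (ttensm f g) h = ttensm f (ttensm g h) ∘ tassoc x y z.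
Proof.
  apply (cancel_r (phi_phiI_twice x y z)).
  apply pad_idm. rnest.
  rewrite (chain (ttensm_phi _ _)), tassoc_phi_chain. rnest.
  rewrite (chain (tensm_merge _ _ _ _)), (comp_idr _ _ h), ttensm_phi.
  rewrite tensm_factor_l. rnest.
  rewrite tassoc_phi_chain, (chain (assoc_nat f g h)).
  rewrite (chain (ttensm_phi _ _)). rnest.
  rewrite (chain (tensm_merge (idm _) f _ _)), (comp_idr _ _ f), ttensm_phi.
  rewrite tensm_factor_r. rnest. reflexivity.
Qed.

Lemma phi_phiI_thrice w x y z :
  (phi (t (t w x) y) z ∘ ((phi (t w x) y ⊗ idm (P z)) ∘
     ((phi w x ⊗ idm (P y)) ⊗ idm (P z))))
  ∘ (((phiI w x ⊗ idm (P y)) ⊗ idm (P z)) ∘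
       ((phiI (t w x) y ⊗ idm (P z)) ∘ phiI (t (t w x) y) z))
  = idm _.
Proof.
  rnest.
  rewrite (chain (tensm_inverse_l (P z) (tensm_inverse_l (P y) (phi_phiI w x)))).
  rewrite comp_idl.
  rewrite (chain (tensm_inverse_l (P z) (phi_phiI (t w x) y))), comp_idl.
  apply phi_phiI.
Qed.

(* The pentagon for [tassoc]: after precomposing with the isomorphism of
   [phi_phiI_thrice], both sides become
   [phi ∘ (1 ⊗ phi) ∘ (1 ⊗ (1 ⊗ phi)) ∘ (1 ⊗ α) ∘ α ∘ (α ⊗ 1)],
   using [tassoc_phi], naturality of α and the pentagon of [C]. *)
Lemma tassoc_pentagon w x y z :
  tassoc w x (t y z) ∘ tassoc (t w x) y z
  = ttensm (idm (P w)) (tassoc x y z)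
    ∘ (tassoc w (t x y) z ∘ ttensm (tassoc w x y) (idm (P z))).
Proof.
  apply (cancel_r (phi_phiI_thrice w x y z)).
  apply pad_idm. rnest.
  (* the left-hand side, via the pentagon of C *)
  rewrite tassoc_phi_chain, (chain (assoc_nat_l (P y) (P z) (phi w x))). rnest.
  rewrite (chain (tensm_interchange (phi w x) (phi y z))). rnest.
  rewrite tassoc_phi_chain, (chain (assoc_nat_r (P w) (P x) (phi y z))). rnest.
  rewrite (chain (pentagon (P w) (P x) (P y) (P z))). rnest.
  rewrite (chain (ttensm_phi (tassoc w x y) (idm (P z)))).
  rnest.
  rewrite (chain (tensm_merge_l (P z) (phi (t w x) y) (tassoc w x y))).
  rewrite (chain (tensm_merge_l (P z) (phi w x ⊗ idm (P y)) _)).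
  rnest. rewrite tassoc_phi, !tensm_comp_l. rnest.
  rewrite tassoc_phi_chain, (chain (assoc_nat_m (P w) (P z) (phi x y))).
  rewrite (chain (ttensm_phi (idm (P w)) (tassoc x y z))). rnest.
  rewrite (chain (tensm_merge_r (P w) (phi (t x y) z) (tassoc x y z))).
  rewrite (chain (tensm_merge_r (P w) (phi x y ⊗ idm (P z)) _)).
  rnest. rewrite tassoc_phi, !tensm_comp_r. rnest.
  reflexivity.
Qed.

End Transport.

(* The structure of [Cq M] is the transport of that of [C] along [Par]:
   [phi M x y : Par x ⊗ Par y -> Par (x * y)] is an isomorphism, and the
   tensor of morphisms and the associator of [Cq M] are the conjugates by
   [phi M] of those of [C]. *)

Lemma phi_phiI (x y : ob (mcat (Cq M))) : phi M x y ∘ phiI M x y = idm _.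
Proof.
  destruct x as [a|], y as [b|]; simpl; auto using lu_luI, ru_ruI, comp_idl.
Qed.

Lemma phiI_phi (x y : ob (mcat (Cq M))) : phiI M x y ∘ phi M x y = idm _.
Proof.
  destruct x as [a|], y as [b|]; simpl; auto using luI_lu, ruI_ru, comp_idl.
Qed.

Local Notation qT := (ttensm (qob M) (Par M) (qprod M) (phi M) (phiI M)).
Local Notation qA := (tassoc (qob M) (Par M) (qprod M) (phi M) (phiI M)).

(* For nonempty factors [qtensm] is literally [⊗], and then [phi] is trivial;
   otherwise [qtensm] is defined as the conjugate. *)
Lemma qtensm_transport x x' y y' (f : hom C (Par M x) (Par M x'))
      (g : hom C (Par M y) (Par M y')) :
  qtensm M x x' y y' f g = qT f g.
Proof.
  destruct x as [a|], x' as [a'|], y as [b|], y' as [b'|]; try reflexivity.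
  unfold ttensm. simpl. rewrite comp_idl, comp_idr. reflexivity.
Qed.

(* When a factor is the empty word [qassoc] is an identity, and Kelly's
   coherences ([ru_assoc], [triangle], [lu_assoc]) show that so is the
   conjugate of the associator. *)
Lemma qassoc_transport x y z : qassoc M x y z = qA x y z.
Proof.
  unfold tassoc. destruct x as [a|], y as [b|].
  - destruct z as [c|]; simpl.
    + rewrite !tensm_idm, !comp_idl, !comp_idr. reflexivity.
    + rewrite tensm_idm, !comp_idl, comp_assoc, ru_assoc, ru_ruI.
      reflexivity.
  - simpl. rewrite (comp_assoc _ _ _ _ _ _ (idm (parT M a) ⊗ mlu (Par M z))).
    rewrite triangle, (chain (tensm_inverse_l _ (ru_ruI _))), comp_idl.
    symmetry. apply (phi_phiI (Some a) z).
  - simpl. rewrite (comp_assoc _ _ _ _ _ _ (mlu _)), lu_nat. rnest.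
    rewrite (comp_assoc _ _ _ _ _ (massoc _ _ _)), lu_assoc.
    rewrite (chain (tensm_inverse_l _ (lu_luI _))), comp_idl.
    symmetry. apply (phi_phiI (Some b) z).
  - simpl. rewrite (comp_assoc _ _ _ _ _ _ (mlu _)), lu_nat. rnest.
    rewrite (comp_assoc _ _ _ _ _ (massoc _ _ _)), lu_assoc.
    rewrite (chain (tensm_inverse_l _ (lu_luI _))), comp_idl, lu_luI.
    reflexivity.
Qed.

(* Naturality of the (identity) unit constraints of [Cq M]: tensoring with
   the identity of the unit object [(∅,∅)] is conjugation by a unitor of [C]. *)
Lemma qlu_nat x x' (f : hom C (Par M x) (Par M x')) :
  qlu M x' ∘ qtensm M None None x x' (idm 1) f = f ∘ qlu M x.
Proof.
  unfold qlu. rewrite qtensm_transport. unfold ttensm. simpl.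
  rewrite comp_idl, comp_idr, comp_assoc, lu_nat. rnest.
  rewrite lu_luI. apply comp_idr.
Qed.

(* On the empty word [phi] is [λ_1], which equals [ρ_1] by Kelly. *)
Lemma qru_nat x x' (f : hom C (Par M x) (Par M x')) :
  qru M x' ∘ qtensm M x x' None None f (idm 1) = f ∘ qru M x.
Proof.
  rewrite qtensm_transport. destruct x as [a|], x' as [a'|]; unfold ttensm;
    simpl; rewrite ?lu_unit_ru_unit, ?luI_unit_ruI_unit;
    rewrite comp_idl, comp_idr, comp_assoc, ru_nat; rnest;
    rewrite ru_ruI; apply comp_idr.
Qed.

(* The monoidal laws of [Cq M]: functoriality of the tensor, naturality of
   the associator and the pentagon come from the transport lemmas; the
   constraints are isomorphisms and the triangle holds case by case, since
   on words with an empty factor they are identities. *)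
Theorem Cq_mon_laws : mon_laws (Cq M).
Proof.
  repeat split.
  - intros x y f. apply comp_idl.
  - intros x y f. apply comp_idr.
  - intros x y z w f g h. apply comp_assoc.
  - intros x y. simpl. rewrite qtensm_transport. apply ttensm_idm, phi_phiI.
  - intros. simpl. rewrite !qtensm_transport. apply ttensm_comp, phiI_phi.
  - destruct x as [a|], y as [b|], z as [c|]; first [apply assocI_assoc | apply comp_idl].
  - destruct x as [a|], y as [b|], z as [c|]; first [apply assoc_assocI | apply comp_idl].
  - apply comp_idl.
  - apply comp_idl.
  - destruct x as [a|]; apply comp_idl.
  - destruct x as [a|]; apply comp_idl.
  - intros. simpl. rewrite !qtensm_transport, !qassoc_transport.
    apply tassoc_nat; [apply phi_phiI | apply phiI_phi].
  - apply qlu_nat.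
  - apply qru_nat.
  - intros w x y z. simpl. rewrite !qtensm_transport, !qassoc_transport.
    apply tassoc_pentagon; [apply phi_phiI | apply phiI_phi].
  - (* triangle: every constraint involved is an identity *)
    intros [a|] y; cbn [Cq tens tensm mlu mru massoc munit qlu qru qassoc qprod];
      rewrite !qtensm_transport, !(ttensm_idm _ _ _ _ _ phi_phiI); apply comp_idr.
Qed.

(* As soon as [C] has an object [X], the associator of [Cq M] at
   [((X),•)] is not an identity: the words [(••)•] and [•(••)] differ. *)
Lemma Cq_non_strict (X : ob C) : non_strict (Cq M).
Proof.
  intros [Hassoc _].
  destruct (Hassoc (Some (Leaf X)) (Some (Leaf X)) (Some (Leaf X))) as [e _].
  discriminate e.
Qed.

(* [j] with [u = Id_1] and [eta = Id_{X⊗Y}] is strong monoidal: on objects of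
   the form [((X),•)] the structure of [Cq M] is literally that of [C]. *)
Lemma j_strong_monoidal : strong_monoidal M (Cq M) (j_fun M) (j_u M) (j_eta M).
Proof.
  unfold strong_monoidal, j_eta, j_u. repeat split; simpl.
  - exists (idm 1). split; apply comp_idl.
  - intros x y. exists (idm (tens x y)). split; apply comp_idl.
  - intros. rewrite comp_idl, comp_idr. reflexivity.
  - intros. rewrite !tensm_idm, !comp_idl, !comp_idr. reflexivity.
  - intros. rewrite tensm_idm, !comp_idl. apply lu_luI.
  - intros. rewrite tensm_idm, !comp_idl. apply ru_ruI.
Qed.

Definition par_fun : FunData (mcat (Cq M)) C :=
  Build_FunData (mcat (Cq M)) C (Par M) (fun x y f => f).

Lemma par_j_iso : nat_iso (fun_comp par_fun (j_fun M)) (fun_id C).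
Proof.
  exists (fun x => idm x). split.
  - intro x. exists (idm x). split; apply comp_idl.
  - intros x y f. simpl. rewrite comp_idl. apply eq_sym, comp_idr.
Qed.

Lemma j_par_iso : nat_iso (fun_comp (j_fun M) par_fun) (fun_id (mcat (Cq M))).
Proof.
  exists (fun x => idm (Par M x) : hom (mcat (Cq M)) _ _). split.
  - intro x. exists (idm (Par M x)). split; apply comp_idl.
  - intros x y f. simpl. rewrite comp_idl. apply eq_sym, comp_idr.
Qed.

Lemma j_equivalence : equivalence (j_fun M).
Proof.
  split; [split; reflexivity|].
  exists par_fun. split; [split; reflexivity|].
  split; [apply par_j_iso | apply j_par_iso].
Qed.

End Monoidal.

Theorem mainTheorem6 (M : MonData) (HM : mon_laws M) :
  mon_laws (Cq M) /\
  (ob (mcat M) -> non_strict (Cq M)) /\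
  strong_monoidal M (Cq M) (j_fun M) (j_u M) (j_eta M) /\
  equivalence (j_fun M).
Proof.
  split; [|split; [|split]].
  - exact (Cq_mon_laws M HM).
  - exact (Cq_non_strict M).
  - exact (j_strong_monoidal M HM).
  - exact (j_equivalence M HM).
Qed.
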